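(* For $n,k\geqslant 0$ let $\mathfrak{f}_{n,k}$ be the number of words of length $n$ on the alphabet $\{1,\dots,k\}$ avoiding both patterns $010$ and $120$ and containing every letter of $\{1,\dots,k\}$ (so $\mathfrak{f}_{0,0}=1$, $\mathfrak{f}_{n,0}=0$ for $n\geqslant1$, $\mathfrak{f}_{0,k}=0$ for $k\geqslant 1$). Then for all $n,k\geqslant 1$, $$\mathfrak{f}_{n,k}=\sum_{p=1}^{n}\sum_{q=0}^{k-1}\mathfrak{f}_{p-1,q}\cdot\bigl(\mathfrak{f}_{n-p,k-q}+\mathfrak{f}_{n-p,k-q-1}\bigr),$$ and the generating function $F(x,y)=\sum_{n,k\geqslant0}\mathfrak{f}_{n,k}x^ny^k$ satisfies $(x+xy)F(x,y)^2-(x+1)F(x,y)+1=0$.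
   Context: A word contains a pattern $p$ if some subsequence is order-isomorphic to $p$; otherwise it avoids $p$. Avoiding $010$: no $i<j<l$ with $\omega_i=\omega_l<\omega_j$. Avoiding $120$: no $i<j<l$ with $\omega_l<\omega_i<\omega_j$. *)

From mathcomp Require Import all_boot all_order all_algebra.
Set Implicit Arguments. Unset Strict Implicit. Unset Printing Implicit Defensive.
Import GRing.Theory Num.Theory.

(* Words of length n over the alphabet {1,...,k} are encoded as n-tuples over
   'I_k = {0,...,k-1}; the shift by one is an order isomorphism, so pattern
   containment is unaffected. *)

Definition contains010 n k (w : n.-tuple 'I_k) : bool :=
  [exists i : 'I_n, exists j : 'I_n, exists l : 'I_n,
     [&& (i < j)%N, (j < l)%N,
         nat_of_ord (tnth w i) == nat_of_ord (tnth w l) &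
         (nat_of_ord (tnth w l) < nat_of_ord (tnth w j))%N]].

Definition contains120 n k (w : n.-tuple 'I_k) : bool :=
  [exists i : 'I_n, exists j : 'I_n, exists l : 'I_n,
     [&& (i < j)%N, (j < l)%N,
         (nat_of_ord (tnth w l) < nat_of_ord (tnth w i))%N &
         (nat_of_ord (tnth w i) < nat_of_ord (tnth w j))%N]].

Definition uses_all n k (w : n.-tuple 'I_k) : bool :=
  [forall c : 'I_k, c \in w].

Definition frakf (n k : nat) : nat :=
  #|[set w : n.-tuple 'I_k |
       [&& ~~ contains010 w, ~~ contains120 w & uses_all w]]|.

(* Formal power series in x, y with integer coefficients, given by their
   coefficient function: A n k = [x^n y^k] A. *)
Definition fps := nat -> nat -> int.

Local Open Scope ring_scope.

Definition fps_add (A B : fps) : fps := fun n k => A n k + B n k.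
Definition fps_opp (A : fps) : fps := fun n k => - A n k.
Definition fps_mul (A B : fps) : fps := fun n k =>
  \sum_(i < n.+1) \sum_(j < k.+1) A i j * B (n - i)%N (k - j)%N.
Definition fps_one : fps := fun n k => ((n == 0%N) && (k == 0%N))%:R.
Definition fps_x : fps := fun n k => ((n == 1%N) && (k == 0%N))%:R.
Definition fps_y : fps := fun n k => ((n == 0%N) && (k == 1%N))%:R.

Definition genF : fps := fun n k => (frakf n k)%:Z.

From mathcomp Require Import all_boot all_order all_algebra.
From mathcomp Require Import zify.
Import GRing.Theory Num.Theory.
Set Implicit Arguments. Unset Strict Implicit. Unset Printing Implicit Defensive.

(* Split a word counted by f_{n,k} (k >= 1) at the first occurrence of its
   largest letter m = k - 1: w = P m T.  Avoiding 010 and 120 forces every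
   letter of P to lie below every letter of T, since a letter x < m of P is
   followed by m, after which nothing <= x may come.  Hence P is a word counted
   by f_{p-1,q}, and T, shifted down by q, is counted by f_{n-p,k-q} or by
   f_{n-p,k-q-1} according as m occurs in T or not; conversely every such
   concatenation avoids both patterns.  This bijection gives the recurrence, and
   the functional equation is the recurrence read coefficientwise, using
   f_{n,k+1} + f_{n+1,k+1} = [x^n y^(k+1)] F^2 + [x^n y^k] F^2. *)

(* An occurrence of 010 or of 120 is exactly a triple i < j < l with
   w_i < w_j and w_l <= w_i. *)
Definition has_pattern (w : seq nat) := exists i j l, [/\ i < j, j < l,
  l < size w, nth 0 w i < nth 0 w j & nth 0 w l <= nth 0 w i].

(* [x :: w'] avoids both patterns iff [w'] does and, from the first letter of
   [w'] above [x] on, every letter stays above [x]. *)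
Fixpoint avoids (w : seq nat) : bool :=
  if w is x :: w' then
    avoids w' && all (fun y => x < y) (drop (find (fun y => x < y) w') w')
  else true.

Lemma has_pattern_cons x w : has_pattern (x :: w) <->
  has_pattern w \/ exists j l, [/\ j < l, l < size w,
                                   x < nth 0 w j & nth 0 w l <= x].
Proof.
split.
  case=> [[|i] [[|j] [[|l] [hij hjl hl hi hli]]]] //=.
    by right; exists j, l.
  by left; exists i, j, l.
case=> [[i [j [l [hij hjl hl hi hli]]]]|[j [l [hjl hl hj hlx]]]].
  by exists i.+1, j.+1, l.+1.
by exists 0, j.+1, l.+1.
Qed.

Lemma above_after_findPn x w :
  ~~ all (fun y => x < y) (drop (find (fun y => x < y) w) w) <->
  exists j l, [/\ j < l, l < size w, x < nth 0 w j & nth 0 w l <= x].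
Proof.
set a := fun y => x < y; set f := find a w; rewrite -has_predC; split.
  case/(has_nthP 0) => i; rewrite size_drop nth_drop /= -leqNgt => hi hn.
  have fw : f < size w by lia.
  have af : x < nth 0 w f by apply: (nth_find 0); rewrite has_find.
  case: i hi hn => [|i] hi hn; first by move: hn; rewrite addn0; lia.
  by exists f, (f + i.+1); split => //; lia.
case=> j [l [hjl hl hj hlx]].
have fj : f <= j by rewrite leqNgt; apply/negP => /(before_find 0); rewrite /a hj.
apply/(has_nthP 0); exists (l - f); rewrite ?size_drop ?nth_drop; first lia.
by rewrite subnKC /= -?leqNgt //; lia.
Qed.

Lemma avoidsP w : reflect (~ has_pattern w) (avoids w).
Proof.
apply: (iffP idP).
  elim: w => [_ [i [j [l [_ _]]]] //|x w IH /= /andP[aw ax]].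
  by case/has_pattern_cons => [/(IH aw) | /above_after_findPn]; rewrite ?ax.
elim: w => [//|x w IH] /= npat; apply/andP; split.
  by apply: IH => pw; apply: npat; apply/has_pattern_cons; left.
by apply/negPn/negP => /above_after_findPn pw; apply: npat; apply/has_pattern_cons; right.
Qed.

Lemma nth_map_val n k (t : n.-tuple 'I_k) (i : 'I_n) :
  nth 0 (map val t) i = tnth t i.
Proof. by rewrite (nth_map (tnth t i)) ?size_tuple // -tnth_nth. Qed.

Lemma contains_has_pattern n k (t : n.-tuple 'I_k) :
  contains010 t || contains120 t <-> has_pattern (map val t).
Proof.
split.
  case/orP => /existsP [i /existsP [j /existsP [l /and4P [hij hjl hli hij']]]];
  by exists i, j, l; rewrite !nth_map_val size_map size_tuple; split => //; lia.
case=> i [j [l [hij hjl]]]; rewrite size_map size_tuple => hl.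
have hj : j < n by lia.
have hi : i < n by lia.
rewrite -[i]/(val (Ordinal hi)) -[j]/(val (Ordinal hj)) -[l]/(val (Ordinal hl)).
rewrite !nth_map_val => hij'; rewrite leq_eqVlt => /orP[hli | hli]; apply/orP; [left | right];
  apply/existsP; exists (Ordinal hi); apply/existsP; exists (Ordinal hj);
  apply/existsP; exists (Ordinal hl); apply/and4P; split => //=.
- by rewrite eq_sym.
- by rewrite (eqP hli).
Qed.

Definition fword k (w : seq nat) :=
  [&& avoids w, all (fun c => c < k) w & all (fun c => c \in w) (iota 0 k)].

Lemma fword_map_val n k (t : n.-tuple 'I_k) :
  [&& ~~ contains010 t, ~~ contains120 t & uses_all t] = fword k (map val t).
Proof.
rewrite andbA -negb_or /fword.
have -> : all (fun c => c < k) (map val t) by rewrite all_map; apply/allP => c _ /=.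
have -> : uses_all t = all (fun c => c \in map val t) (iota 0 k).
  apply/forallP/allP => [used c | used c].
    by rewrite mem_iota add0n => hc; rewrite -[c]/(val (Ordinal hc)) (mem_map val_inj).
  by rewrite -(mem_map val_inj) used // mem_iota /=.
congr (_ && _); apply/idP/avoidsP => [/negP + /contains_has_pattern // | npat].
by apply/negP => /contains_has_pattern.
Qed.

Definition fwords n k : seq (seq nat) :=
  [seq map val (val t) | t in [set t : n.-tuple 'I_k |
     [&& ~~ contains010 t, ~~ contains120 t & uses_all t]]].

Lemma size_fwords n k : size (fwords n k) = frakf n k.
Proof. by rewrite size_map -cardE. Qed.

Lemma fwords_uniq n k : uniq (fwords n k).
Proof.
rewrite map_inj_uniq ?enum_uniq // => t1 t2 /(inj_map val_inj).
exact: val_inj.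
Qed.

Lemma mem_fwords n k w : (w \in fwords n k) = fword k w && (size w == n).
Proof.
apply/mapP/andP => [[t] | [fw /eqP sw]].
  by rewrite mem_enum inE fword_map_val => ft ->; rewrite size_map size_tuple.
have wk : all (fun c => c < k) w by case/and3P: fw.
set u := pmap (insub : nat -> option 'I_k) w.
have uw : map val u = w.
  rewrite (pmap_filter (@insubK _ _ _)); apply/all_filterP.
  by apply/allP => c /(allP wk) ck; rewrite isSome_insub.
have su : size u == n by rewrite -(size_map val) uw sw.
by exists (Tuple su); rewrite // mem_enum inE fword_map_val /= uw.
Qed.

Lemma frakf_const n k (b : bool) s0 :
  (forall w, fword k w && (size w == n) = b && (w == s0)) -> frakf n k = b.
Proof.
move=> memE; rewrite -size_fwords.
have /perm_size -> : perm_eq (fwords n k) (if b then [:: s0] else [::]).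
  apply: uniq_perm; first exact: fwords_uniq; first by case: (b).
  by move=> w; rewrite mem_fwords memE; case: (b); rewrite ?inE.
by case: (b).
Qed.

Lemma frakf0n k : frakf 0 k = (k == 0).
Proof.
apply: (@frakf_const 0 k (k == 0) [::]) => w.
by case: w => [|c w]; rewrite /= ?andbF //= /fword /=; case: k.
Qed.

Lemma frakfn0 n : frakf n 0 = (n == 0).
Proof.
apply: (@frakf_const n 0 (n == 0) [::]) => w; rewrite /fword.
by case: w => [|c w] /=; [rewrite eqxx andbT eq_sym | rewrite !andbF].
Qed.

Lemma avoids_catr P T : avoids (P ++ T) -> avoids T.
Proof. by elim: P => //= x P IH /andP[/IH]. Qed.

Lemma avoids_catl P T : avoids (P ++ T) -> avoids P.
Proof.
elim: P => //= x P IH /andP[/IH -> /=]; rewrite find_cat; case: ifP => hasP.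
  by rewrite drop_cat -has_find hasP all_cat => /andP[].
by rewrite (hasNfind (negbT hasP)) drop_size.
Qed.

Lemma avoids_cat P T : avoids P -> avoids T ->
  (forall x y, x \in P -> y \in T -> x < y) -> avoids (P ++ T).
Proof.
elim: P => //= x P IH /andP[aP ax] aT PT.
rewrite IH // => [|a b aP' bT]; last by apply: PT; rewrite ?inE ?aP' ?orbT.
have xT : all (fun y => x < y) T by apply/allP => y; apply: PT; rewrite inE eqxx.
rewrite find_cat; case: ifP => hasP; first by rewrite drop_cat -has_find hasP all_cat ax.
rewrite drop_cat ltnNge leq_addr /= addKn.
by apply/allP => y /mem_drop; apply/allP.
Qed.

Lemma avoids_cons_max m T : all (fun y => y <= m) T -> avoids (m :: T) = avoids T.
Proof.
move=> Tm /=; rewrite hasNfind ?drop_size ?andbT //.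
by apply/hasPn => y /(allP Tm); rewrite ltnNge => ->.
Qed.

Lemma avoids_shift q S : avoids (map (addn q) S) = avoids S.
Proof.
elim: S => //= x S ->; congr (_ && _).
rewrite find_map -map_drop all_map.
rewrite (@eq_find _ _ (fun y => x < y)) => [|y]; last by rewrite /= ltn_add2l.
by apply: eq_all => y; rewrite /= ltn_add2l.
Qed.

Lemma avoids_above_after P z V x : avoids (P ++ z :: V) -> x \in P -> x < z ->
  all (fun y => x < y) V.
Proof.
elim: P => //= x' P IH /andP[aPV ax']; rewrite inE => /predU1P[-> xz | xP]; last exact: IH.
move: ax'; rewrite find_cat; case: ifP => hasP.
  by rewrite drop_cat -has_find hasP all_cat => /andP[_] /= /andP[].
by rewrite /= xz addn0 drop_cat ltnn subnn /= => /andP[].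
Qed.

Definition letter_bound (P : seq nat) := \max_(x <- P) x.+1.

Lemma letter_bound_gt P x : x \in P -> x < letter_bound P.
Proof. by move=> xP; apply: (leq_bigmax_seq x). Qed.

Lemma letter_bound_leq P b : (letter_bound P <= b) = all (fun x => x < b) P.
Proof. by apply/bigmax_leqP_seq/allP => Pb x xP; rewrite /= ?(Pb x xP). Qed.

Lemma letter_bound_fword q P : fword q P -> letter_bound P = q.
Proof.
case/and3P => _ Pq usedP; apply/eqP; rewrite eqn_leq letter_bound_leq Pq /=.
case: q usedP {Pq} => // q usedP; apply: letter_bound_gt.
by apply: (allP usedP); rewrite mem_iota ltnSn.
Qed.

(* [((p, q), (P, (b, U)))] stands for the word [P ++ m :: map (addn q) U]
   whose first [m] sits at position [p] (counting from 1), with [P] over the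
   letters below [q] and [b = 1] exactly when [m] does not occur again. *)
Definition decomposition := ((nat * nat) * (seq nat * (nat * seq nat)))%type.

Definition glue m (d : decomposition) : seq nat :=
  d.2.1 ++ m :: map (addn d.1.2) d.2.2.2.

Definition split_at_max m (w : seq nat) : decomposition :=
  let i := index m w in let P := take i w in let T := drop i.+1 w in
  let q := letter_bound P in
  ((i.+1, q), (P, (nat_of_bool (m \notin T), map (subn^~ q) T))).

Definition decompositions n m : seq decomposition :=
  [seq (pq, PbU) | pq <- [seq (p, q) | p <- iota 1 n, q <- iota 0 m.+1],
     PbU <- [seq (P, bU) | P <- fwords pq.1.-1 pq.2,
              bU <- [seq (b, U) | b <- iota 0 2,
                       U <- fwords (n - pq.1) (m.+1 - pq.2 - b)]]].

Lemma mem_decompositions n m p q P b U :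
  (((p, q), (P, (b, U))) \in decompositions n m) =
  [&& 0 < p <= n, q <= m, P \in fwords p.-1 q, b < 2
    & U \in fwords (n - p) (m.+1 - q - b)].
Proof.
apply/allpairsPdep/and5P.
  case=> [[p' q'] [[P' [b' U']] [pq PbU /= [? ? ? ? ?]]]]; subst.
  case/allpairsP: pq => [[x y] [xn ym /= [? ?]]]; subst.
  case/allpairsP: PbU => [[P1 [b1 U1]] [P1in bU /= [? ? ?]]]; subst.
  case/allpairsPdep: bU => [b2' [U2 [b2 U2in /= [? ?]]]]; subst.
  by move: xn ym b2; rewrite !mem_iota; split => //; lia.
case=> pn qm Pin b2 Uin; exists (p, q), (P, (b, U)); split => //.
  by apply/allpairsP; exists (p, q); rewrite !mem_iota; split => //=; lia.
apply/allpairsP; exists (P, (b, U)); split => //.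
by apply/allpairsPdep; exists b, U; rewrite !mem_iota; split => //; lia.
Qed.

Lemma decompositions_uniq n m : uniq (decompositions n m).
Proof.
apply: allpairs_uniq_dep => [|pq _|[? ?] [? ?] _ _ [-> ->] //].
  by apply: allpairs_uniq; rewrite ?iota_uniq // => [[? ?] [? ?] _ _ [-> ->]].
apply: allpairs_uniq => [||[? ?] [? ?] _ _ [-> ->] //]; first exact: fwords_uniq.
apply: allpairs_uniq_dep => [||[? ?] [? ?] _ _ [-> ->] //]; first exact: iota_uniq.
by move=> *; apply: fwords_uniq.
Qed.

Lemma glue_in_fwords n m d :
  d \in decompositions n m -> glue m d \in fwords n m.+1.
Proof.
case: d => [[p q] [P [b U]]]; rewrite mem_decompositions !mem_fwords /glue /=.
case/and5P=> pn qm /andP[/and3P[aP Pq usedP] /eqP sP] b2.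
case/andP=> /and3P[aU Ubound usedU] /eqP sU.
rewrite size_cat /= size_map sP sU; apply/andP; split; last by apply/eqP; lia.
apply/and3P; split.
- apply: avoids_cat => // [|x y /(allP Pq) /= xq].
    rewrite avoids_cons_max ?avoids_shift // all_map.
    by apply/allP => y /(allP Ubound) /=; lia.
  by rewrite inE => /predU1P[-> | /mapP[z _ ->]]; lia.
- rewrite all_cat /= all_map ltnSn /=; apply/andP; split.
    by apply/allP => x /(allP Pq) /=; lia.
  by apply/allP => y /(allP Ubound) /=; lia.
apply/allP => c; rewrite mem_iota add0n => cm; rewrite mem_cat inE.
case: (ltnP c q) => [cq | qc].
  by rewrite (allP usedP) // mem_iota.
case: (eqVneq c m) => [-> | c_neq_m]; rewrite ?eqxx ?orbT //.
apply/orP; right; apply/orP; right; apply/mapP; exists (c - q); last lia.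
by apply: (allP usedU); rewrite mem_iota; lia.
Qed.

Lemma split_at_maxK n m d :
  d \in decompositions n m -> split_at_max m (glue m d) = d.
Proof.
case: d => [[p q] [P [b U]]]; rewrite mem_decompositions !mem_fwords /glue /=.
case/and5P=> pn qm /andP[fP /eqP sP] b2 /andP[/and3P[_ Ubound usedU] _].
have mNP : m \notin P by case/and3P: fP => _ /allP Pq _; apply/negP => /Pq; lia.
rewrite /split_at_max take_pivot // index_pivot // -cat_rcons drop_size_cat ?size_rcons //.
rewrite (letter_bound_fword fP) (mapK (addKn q)) sP prednK; last by case/andP: pn.
suff -> : (m \notin map (addn q) U : nat) = b by [].
case: b b2 Ubound usedU => [|[|//]] _ Ubound usedU.
  suff -> : m \in map (addn q) U by [].
  by apply/mapP; exists (m - q); rewrite ?(allP usedU) ?mem_iota; lia.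
suff /negbTE -> : m \notin map (addn q) U by [].
by apply/mapP => -[y /(allP Ubound) /=]; lia.
Qed.

Section SplitAtMax.

Variables (m : nat) (w : seq nat).
Hypothesis fw : fword m.+1 w.

Let P := take (index m w) w.
Let T := drop (index m w).+1 w.
Let q := letter_bound P.

Lemma word_leq_max x : x \in w -> x <= m.
Proof. by case/and3P: fw => _ /allP wm _ /wm. Qed.

Lemma mem_word c : c <= m -> c \in w.
Proof. by case/and3P: fw => _ _ /allP used cm; apply: used; rewrite mem_iota. Qed.

Lemma split_at_maxE : w = P ++ m :: T.
Proof. by rewrite -drop_index ?cat_take_drop ?mem_word. Qed.

Lemma max_notin_prefix : m \notin P.
Proof. by rewrite in_take ?ltnn ?mem_word. Qed.

Lemma prefix_lt_max x : x \in P -> x < m.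
Proof.
move=> xP; rewrite ltn_neqAle word_leq_max ?(mem_take xP) // andbT.
by apply: contraNneq max_notin_prefix => <-.
Qed.

Lemma prefix_lt_suffix x y : x \in P -> y \in T -> x < y.
Proof.
move=> xP; apply/allP; apply: (avoids_above_after _ xP (prefix_lt_max xP)).
by rewrite -split_at_maxE; case/and3P: fw.
Qed.

Lemma prefix_letters c : (c \in P) = (c < q).
Proof.
apply/idP/idP => [/letter_bound_gt // | cq].
apply: contraTT cq => cNP; rewrite -leqNgt letter_bound_leq.
apply/allP => x xP; rewrite ltn_neqAle; apply/andP; split.
  by apply: contraNneq cNP => <-.
rewrite leqNgt; apply: contra cNP => cx.
have := mem_word (leq_trans (ltnW cx) (ltnW (prefix_lt_max xP))).
rewrite {1}split_at_maxE mem_cat inE => /or3P[// | /eqP cm | cT].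
  by have := prefix_lt_max xP; rewrite -cm ltnNge (ltnW cx).
by have := prefix_lt_suffix xP cT; rewrite ltnNge (ltnW cx).
Qed.

Lemma suffix_geq y : y \in T -> q <= y.
Proof.
case: (posnP q) => [-> // | q_gt0 yT].
have : q.-1 \in P by rewrite prefix_letters prednK.
by move/prefix_lt_suffix/(_ yT); rewrite prednK.
Qed.

Lemma letter_bound_prefix : q <= m.
Proof. by rewrite letter_bound_leq; apply/allP => x /prefix_lt_max. Qed.

Lemma shift_suffixK : map (addn q) (map (subn^~ q) T) = T.
Proof. by rewrite -map_comp -[RHS]map_id; apply/eq_in_map => y /suffix_geq /subnKC. Qed.

Lemma glue_split_at_max : glue m (split_at_max m w) = w.
Proof. by rewrite /glue /= shift_suffixK -split_at_maxE. Qed.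

Lemma split_at_max_in : split_at_max m w \in decompositions (size w) m.
Proof.
have [aw _ _] := and3P fw.
rewrite split_at_maxE in aw.
rewrite mem_decompositions !mem_fwords /=; apply/and5P; split.
- by rewrite index_mem mem_word.
- exact: letter_bound_prefix.
- rewrite size_takel ?index_size // eqxx andbT; apply/and3P; split.
  + exact: avoids_catl aw.
  + by apply/allP => x; rewrite -/P prefix_letters.
  + by apply/allP => c; rewrite mem_iota -/P prefix_letters.
- by case: (_ \notin _).
rewrite -/P -/T -/q size_map size_drop eqxx andbT; apply/and3P; split.
- by rewrite -(avoids_shift q) shift_suffixK; apply: (@avoids_catr [:: m]) (avoids_catr aw).
- apply/allP => _ /mapP[y yT ->].
  have qy := suffix_geq yT.
  have ym : y <= m by apply: word_leq_max; rewrite split_at_maxE mem_cat inE yT !orbT.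
  case: (boolP (m \in T)) => [_ | mNT] /=; first lia.
  have : y != m by apply: contraNneq mNT => <-.
  lia.
apply/allP => c; rewrite mem_iota add0n => cb.
apply/mapP; exists (q + c); last by rewrite addKn.
have : q + c \in w by apply: mem_word; move: cb; case: (_ \notin _) => /=; lia.
rewrite {1}split_at_maxE mem_cat inE prefix_letters ltnNge leq_addr /=.
case/predU1P=> [cm | //]; move: cb; rewrite -cm.
by case: (q + c \in T) => //=; lia.
Qed.

End SplitAtMax.

Lemma uniq_size_bij (A B : eqType) (X : seq A) (Y : seq B) (f : A -> B) (g : B -> A) :
  uniq X -> uniq Y -> {in X, forall x, f x \in Y} -> {in Y, forall y, g y \in X} ->
  {in X, cancel f g} -> {in Y, cancel g f} -> size X = size Y.
Proof.
move=> uX uY fXY gYX fK gK; rewrite -(size_map f); apply/perm_size/uniq_perm => //.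
  by rewrite (map_inj_in_uniq (can_in_inj fK)).
move=> y; apply/mapP/idP => [[x xX ->] | yY]; first exact: fXY.
by exists (g y); rewrite ?gYX ?gK.
Qed.

Lemma frakf_decompositions n m : frakf n m.+1 = size (decompositions n m).
Proof.
rewrite -size_fwords; symmetry.
apply: (@uniq_size_bij _ _ _ _ (glue m) (split_at_max m)) => [||d|w|d|w].
- exact: decompositions_uniq.
- exact: fwords_uniq.
- exact: glue_in_fwords.
- by rewrite mem_fwords => /andP[fw /eqP <-]; apply: split_at_max_in.
- exact: split_at_maxK.
- by rewrite mem_fwords => /andP[fw _]; apply: glue_split_at_max.
Qed.

Lemma frakf_rec n k : 0 < k ->
  frakf n k = \sum_(1 <= p < n.+1) \sum_(0 <= q < k)
                frakf p.-1 q * (frakf (n - p) (k - q) + frakf (n - p) (k - q).-1).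
Proof.
case: k => // m _; rewrite frakf_decompositions size_allpairs_dep sumnE big_map.
rewrite big_allpairs /index_iota subSS !subn0.
apply: eq_bigr => p _; apply: eq_bigr => q _.
by rewrite size_allpairs size_allpairs_dep /= !size_fwords subn0 subn1 addn0.
Qed.

Definition frakf_conv n k :=
  \sum_(i < n.+1) \sum_(j < k.+1) frakf i j * frakf (n - i) (k - j).

Lemma frakf_conv_rec n k :
  frakf_conv n k.+1 + frakf_conv n k = frakf n k.+1 + frakf n.+1 k.+1.
Proof.
have last_col : \sum_(i < n.+1) frakf i k.+1 * frakf (n - i) 0 = frakf n k.+1.
  rewrite big_ord_recr /= subnn frakfn0 muln1 big1 // => i _.
  by rewrite frakfn0 subn_eq0 leqNgt ltn_ord muln0.
rewrite /frakf_conv; under eq_bigr do rewrite big_ord_recr /= subnn.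
rewrite big_split /= last_col addnAC addnC; congr (_ + _).
rewrite (frakf_rec n.+1 (ltn0Sn k)) big_add1 /= big_mkord -big_split /=.
apply: eq_bigr => i _; rewrite big_mkord -big_split /=.
by apply: eq_bigr => j _; rewrite subSS mulnDr subSn // -ltnS.
Qed.

Lemma frakf_conv_n0 n : frakf_conv n 0 = (n == 0).
Proof.
rewrite /frakf_conv big_ord_recl /= !big_ord1 !frakfn0 subn0 mul1n big1 ?addn0 // => i _.
by rewrite big_ord1 !frakfn0.
Qed.

Section GeneratingFunction.

Local Open Scope ring_scope.

Definition fps_monomial (a b : nat) : fps := fun n k => ((n == a) && (k == b))%:R.

Lemma fps_mul_monomial a b (A : fps) n k : fps_mul (fps_monomial a b) A n k =
  if (a <= n)%N && (b <= k)%N then A (n - a)%N (k - b)%N else 0.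
Proof.
rewrite /fps_mul /fps_monomial.
transitivity (\sum_(i < n.+1 | i == a :> nat) \sum_(j < k.+1 | j == b :> nat)
                 A (n - i)%N (k - j)%N).
  rewrite [RHS]big_mkcond; apply: eq_bigr => i _ /=.
  case: (i == a :> nat) => /=; last by rewrite big1 // => j _; rewrite mul0r.
  rewrite [RHS]big_mkcond; apply: eq_bigr => j _ /=.
  by case: (j == b :> nat); rewrite /= ?mul1r ?mul0r.
rewrite (big_ord1_eq _ (fun i => \sum_(j < k.+1 | j == b :> nat) A (n - i)%N (k - j)%N)).
rewrite (big_ord1_eq _ (fun j => A (n - a)%N (k - j)%N)) !ltnS.
by case: (a <= n)%N; case: (b <= k)%N.
Qed.

Lemma eq_fps_mull (A A' B : fps) n k : (forall i j, A i j = A' i j) ->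
  fps_mul A B n k = fps_mul A' B n k.
Proof. by move=> AA'; apply: eq_bigr => i _; apply: eq_bigr => j _; rewrite AA'. Qed.

Lemma fps_mulDl (A B C : fps) n k :
  fps_mul (fps_add A B) C n k = fps_mul A C n k + fps_mul B C n k.
Proof.
rewrite /fps_mul -big_split; apply: eq_bigr => i _ /=.
by rewrite -big_split; apply: eq_bigr => j _ /=; rewrite mulrDl.
Qed.

Lemma fps_mul_xy i j : fps_mul fps_x fps_y i j = fps_monomial 1 1 i j.
Proof.
rewrite -[fps_x]/(fps_monomial 1 0) fps_mul_monomial /fps_monomial /fps_y.
by case: i => [|[|i]] //=; case: j => [|[|j]].
Qed.

Lemma fps_mul_genF n k : fps_mul genF genF n k = (frakf_conv n k)%:R.
Proof.
rewrite /fps_mul /frakf_conv natr_sum; apply: eq_bigr => i _.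
by rewrite natr_sum; apply: eq_bigr => j _; rewrite natrM !natz.
Qed.

Lemma genF_equation n k :
  fps_add
    (fps_add
       (fps_mul (fps_add fps_x (fps_mul fps_x fps_y)) (fps_mul genF genF))
       (fps_opp (fps_mul (fps_add fps_x fps_one) genF)))
    fps_one n k = 0.
Proof.
rewrite /fps_add /fps_opp !fps_mulDl (eq_fps_mull _ _ _ fps_mul_xy).
rewrite -[fps_x]/(fps_monomial 1 0) -[fps_one]/(fps_monomial 0 0).
rewrite !fps_mul_monomial !fps_mul_genF /genF /fps_monomial.
case: n => [|n]; case: k => [|k]; rewrite !subn0 ?subn1 /= ?addr0 ?add0r.
- by rewrite frakf0n.
- by rewrite frakf0n oppr0.
- by rewrite frakf_conv_n0 !frakfn0; case: n.
- by apply/eqP; rewrite subr_eq0 !natz -!PoszD frakf_conv_rec.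
Qed.

End GeneratingFunction.

Theorem mainTheorem4 :
  (forall n k : nat, (1 <= n)%N -> (1 <= k)%N ->
     frakf n k =
     (\sum_(1 <= p < n.+1) \sum_(0 <= q < k)
        frakf p.-1 q * (frakf (n - p) (k - q) + frakf (n - p) (k - q).-1))%N)
  /\
  (forall n k : nat,
     fps_add
       (fps_add
          (fps_mul (fps_add fps_x (fps_mul fps_x fps_y)) (fps_mul genF genF))
          (fps_opp (fps_mul (fps_add fps_x fps_one) genF)))
       fps_one n k = 0%R).
Proof. by split=> [n k _ /frakf_rec|]; last exact: genF_equation. Qed.
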